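(* Let $K=2^m$ with $m\in\mathbb{N}$, let $\gamma,\delta>0$, and let $a\in\mathbb{R}^{K-1}$ have $a_i=\gamma$ for odd $i$ and $a_i=\delta$ for even $i$ ($i=1,\dots,K-1$), so $\gamma$ appears $K/2$ times and $\delta$ appears $K/2-1$ times. Then $$\big(\Psi e^{-\Psi a}\big)_i=\begin{cases}2e^{-K\gamma}+(K-2)e^{-\frac K2(\gamma+\delta)}, & i\text{ odd},\\ Ke^{-\frac K2(\gamma+\delta)}, & i\text{ even},\end{cases}$$ where the exponential $e^{-\Psi a}$ is taken entrywise.
   Context: Sylvester Hadamard matrices: $\Phi_1=(1)$, $\Phi_{2^m}=\begin{bmatrix}\Phi_{2^{m-1}}&\Phi_{2^{m-1}}\\ \Phi_{2^{m-1}}&-\Phi_{2^{m-1}}\end{bmatrix}$, $\Phi=\Phi_K$. $\Psi\in\mathbb{R}^{(K-1)\times(K-1)}$ is obtained from $1_K1_K^T-\Phi$ by deleting its first row and first column, with rows/columns of $\Psi$ indexed $1,\dots,K-1$. *)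

From mathcomp Require Import all_boot all_order all_algebra.
From mathcomp Require Import reals sequences exp.
Set Implicit Arguments. Unset Strict Implicit. Unset Printing Implicit Defensive.
Import Order.TTheory GRing.Theory Num.Theory.
Local Open Scope ring_scope.

(* Entry (i,j) (0-based) of the Sylvester Hadamard matrix Phi_{2^m},
   following the block recursion
   Phi_{2^(m+1)} = [[Phi_{2^m}, Phi_{2^m}], [Phi_{2^m}, -Phi_{2^m}]]. *)
Fixpoint sylv (m i j : nat) : int :=
  match m with
  | 0 => 1
  | m'.+1 =>
    let h := (2 ^ m')%N in
    if (i < h)%N then
      (if (j < h)%N then sylv m' i j else sylv m' i (j - h))
    else
      (if (j < h)%N then sylv m' (i - h) j else - sylv m' (i - h) (j - h))
  end.

Definition Phi (R : nzRingType) (m : nat) : 'M[R]_(2 ^ m) :=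
  \matrix_(i, j) (sylv m i j)%:~R.

(* Psi: 1_K 1_K^T - Phi with first row and column deleted; the 0-based
   index k of Psi corresponds to row/column k+1 of Phi (i.e. the paper's
   index k+1 in 1..K-1). *)
Definition Psi (R : nzRingType) (m : nat) : 'M[R]_(2 ^ m - 1) :=
  \matrix_(i, j) (1 - (sylv m i.+1 j.+1)%:~R).

(* The vector a: paper index i = k+1; a_i = gamma if i odd, delta if even *)
Definition avec (R : nzRingType) (m : nat) (gamma delta : R) : 'cV[R]_(2 ^ m - 1) :=
  \col_k (if odd k.+1 then gamma else delta).

(* The rows of Phi are pairwise orthogonal with squared norm K; row 0 is
   constantly 1 and row j has entry (-1)^j in column 1.  Padding a vector
   indexed like Psi with a zeroth coordinate changes no product with Psi,
   because column 0 of 1 - Phi vanishes.  Padded, the vector a is the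
   combination ((gamma + delta) Phi_0 + (delta - gamma) Phi_1) / 2 of the first
   two rows, so orthogonality gives (Psi a)_i = K gamma for i = 1 and
   K (gamma + delta) / 2 otherwise.  Thus, padded, exp(-Psi a) is
   E2 Phi_0 + (E1 - E2) e_1 with E1 = exp(-K gamma), E2 = exp(-K (gamma + delta) / 2),
   and a second application of orthogonality yields the claim. *)

From mathcomp Require Import all_boot all_order all_algebra.
From mathcomp Require Import reals sequences exp.
From mathcomp Require Import ring zify.
Import Order.TTheory GRing.Theory Num.Theory.
Local Open Scope ring_scope.

Lemma sylvS m i j : sylv m.+1 i j =
  if (i < 2 ^ m)%N then (if (j < 2 ^ m)%N then sylv m i j else sylv m i (j - 2 ^ m))
  else (if (j < 2 ^ m)%N then sylv m (i - 2 ^ m) j else - sylv m (i - 2 ^ m) (j - 2 ^ m)).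
Proof. by []. Qed.

Lemma sylv_col0 m i : sylv m i 0 = 1.
Proof. by elim: m i => [|m IH] i //; rewrite sylvS expn_gt0; case: ifP. Qed.

Lemma sylv_row0 m j : sylv m 0 j = 1.
Proof. by elim: m j => [|m IH] j //; rewrite sylvS expn_gt0; case: ifP. Qed.

Lemma sylv_sym m i j : sylv m i j = sylv m j i.
Proof.
elim: m i j => [//|m IH] i j; rewrite !sylvS.
by case: (ltnP i (2 ^ m)); case: (ltnP j (2 ^ m)); rewrite IH.
Qed.

Lemma exp2S_gt1 m : (1 < 2 ^ m.+1)%N.
Proof. by rewrite -[1%N]/(2 ^ 0)%N ltn_exp2l. Qed.

Lemma sylv_row1 m j : (j < 2 ^ m.+1)%N -> sylv m.+1 1 j = (-1) ^+ odd j.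
Proof.
elim: m j => [|m IH] j hj; first by case: j hj => [|[|]].
rewrite sylvS exp2S_gt1; case: ltnP => [j_lt | j_ge]; first exact: IH.
rewrite IH; last by rewrite expnS in hj; lia.
by rewrite oddB // expnS oddM addbF.
Qed.

Lemma sum_nat_double (V : nmodType) (F : nat -> V) h :
  \sum_(0 <= j < h + h) F j = \sum_(0 <= j < h) F j + \sum_(0 <= j < h) F (j + h).
Proof. by rewrite (big_cat_nat _ (n := h)) ?leq_addr // -{2}[h]add0n big_addn addnK. Qed.

Lemma sylv_orthogonal m i k : (i < 2 ^ m)%N -> (k < 2 ^ m)%N ->
  \sum_(0 <= j < 2 ^ m) sylv m i j * sylv m k j = ((i == k) * 2 ^ m)%N%:Z.
Proof.
elim: m i k => [|m IH] i k; first by case: i; case: k => //; rewrite big_nat1.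
set h := (2 ^ m)%N; have -> : (2 ^ m.+1 = h + h)%N by rewrite expnS /h; lia.
move=> hi hk; rewrite sum_nat_double.
under eq_big_nat => j /andP[_ hj] do rewrite !sylvS -/h hj.
under [X in _ + X]eq_bigr => j _ do rewrite !sylvS -/h (ltnNge (j + h)) leq_addl addnK /=.
case: (ltnP i h) => hih; case: (ltnP k h) => hkh;
  under [X in _ + X]eq_bigr => j _ do rewrite ?mulrNN ?mulrN ?mulNr;
  by rewrite ?sumrN !IH; lia.
Qed.

Lemma sum_one_sub_sylv_mul (R : pzRingType) m k l :
  (0 < k < 2 ^ m)%N -> (l < 2 ^ m)%N ->
  \sum_(0 <= j < 2 ^ m) (1 - (sylv m k j)%:~R) * (sylv m l j)%:~R
  = ((l == 0)%:R - (l == k)%:R) * (2 ^ m)%:R :> R.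
Proof.
move=> /andP[k_gt0 k_lt] l_lt.
transitivity ((\sum_(0 <= j < 2 ^ m)
  (sylv m 0 j * sylv m l j - sylv m k j * sylv m l j))%:~R : R).
  rewrite rmorph_sum; apply: eq_bigr => j _.
  by rewrite sylv_row0 mul1r mulrBl mul1r rmorphB rmorphM.
rewrite sumrB !sylv_orthogonal ?expn_gt0 // intrB !PoszM !intrM.
by rewrite (eq_sym 0%N) (eq_sym k) mulrBl.
Qed.

Lemma Psi_mul_shifted_col (R : nzRingType) m (f : nat -> R) (k : 'I_(2 ^ m - 1)) :
  (Psi R m *m \col_(j < 2 ^ m - 1) f j.+1) k 0
  = \sum_(0 <= j < 2 ^ m) (1 - (sylv m k.+1 j)%:~R) * f j.
Proof.
rewrite mxE; under eq_bigr => j _ do rewrite !mxE.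
rewrite -(big_mkord xpredT (fun j => (1 - (sylv m k.+1 j.+1)%:~R) * f j.+1)).
rewrite [X in _ = \sum_(0 <= _ < X) _](_ : 2 ^ m = (2 ^ m - 1).+1)%N; last first.
  by rewrite subn1 prednK ?expn_gt0.
by rewrite [in RHS]big_nat_recl // sylv_col0 subrr mul0r add0r.
Qed.

Lemma Psi_mul_avec (R : numFieldType) m (gamma delta : R) (k : 'I_(2 ^ m.+1 - 1)) :
  (Psi R m.+1 *m avec m.+1 gamma delta) k 0 =
  if k == 0 :> nat then (2 ^ m.+1)%:R * gamma
  else (2 ^ m.+1)%:R / 2 * (gamma + delta).
Proof.
rewrite (Psi_mul_shifted_col _ _ (fun j => if odd j then gamma else delta)).
have k_lt : (0 < k.+1 < 2 ^ m.+1)%N by have := ltn_ord k; lia.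
have alternating j : (j < 2 ^ m.+1)%N -> (if odd j then gamma else delta) =
    (sylv m.+1 0 j)%:~R * ((gamma + delta) / 2) + (sylv m.+1 1 j)%:~R * ((delta - gamma) / 2).
  by move=> j_lt; rewrite sylv_row0 sylv_row1 // intr_sign; case: odd; field.
under eq_big_nat => j /andP[_ j_lt] do rewrite alternating // mulrDr !mulrA.
rewrite big_split -!mulr_suml !sum_one_sub_sylv_mul ?expn_gt0 ?exp2S_gt1 //=.
by rewrite eqSS eq_sym; case: (k == 0 :> nat); rewrite /= ?mulr1n; field.
Qed.

Lemma Psi_mul_col_row1 (R : comNzRingType) m (x y : R) (i : 'I_(2 ^ m.+1 - 1)) :
  (Psi R m.+1 *m \col_(j < 2 ^ m.+1 - 1) (if j.+1 == 1 then x else y)) i 0 =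
  (2 ^ m.+1)%:R * y + (1 - (-1) ^+ odd i.+1) * (x - y).
Proof.
rewrite (Psi_mul_shifted_col _ _ (fun j => if j == 1 then x else y)).
have i_lt : (0 < i.+1 < 2 ^ m.+1)%N by have := ltn_ord i; lia.
have indicator j : (if j == 1 then x else y) = (sylv m.+1 0 j)%:~R * y + (j == 1)%:R * (x - y).
  by rewrite sylv_row0 rmorph1 mul1r; case: eqP => _; rewrite /= ?mul1r ?mul0r ?addr0 // addrC subrK.
under eq_bigr => j _ do rewrite indicator mulrDr !mulrA.
rewrite big_split -!mulr_suml sum_one_sub_sylv_mul ?expn_gt0 //.
under eq_bigr => j _ do rewrite mulr_natr mulrb.
by rewrite -big_mkcond big_nat1_eq exp2S_gt1 sylv_sym sylv_row1 ?intr_sign //= subr0 mul1r.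
Qed.

Theorem lemmaD8 (R : realType) (m : nat) (gamma delta : R)
  (hg : 0 < gamma) (hd : 0 < delta) (i : 'I_(2 ^ m - 1)) :
  let K : R := (2 ^ m)%N%:R in
  (Psi R m *m map_mx (fun x => expR (- x)) (Psi R m *m avec m gamma delta)) i 0 =
  (if odd i.+1
   then 2 * expR (- (K * gamma)) + (K - 2) * expR (- (K / 2 * (gamma + delta)))
   else K * expR (- (K / 2 * (gamma + delta)))).
Proof.
case: m i => [|m] i K; first by case: i.
set E1 := expR (- (K * gamma)); set E2 := expR (- (K / 2 * (gamma + delta))).
have -> : map_mx (fun x => expR (- x)) (Psi R m.+1 *m avec m.+1 gamma delta) =
    \col_(j < 2 ^ m.+1 - 1) (if j.+1 == 1 then E1 else E2).
  apply/matrixP => k c; rewrite ord1 [LHS]mxE Psi_mul_avec -/K [RHS]mxE eqSS; by case: eqP.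
by rewrite (Psi_mul_col_row1 _ _ E1 E2) -/K; case: (odd i.+1); rewrite /= ?expr0 ?expr1; ring.
Qed.
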